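(* Let $\mathcal{C}=\{C_1,\ldots,C_r\}$ be a partition of $C=[n]$. Suppose $q$ and all $q^{C_j}$ are symmetric, i.e. $q(A)=1/\binom{n}{|A|}$ and $q^{C_j}(A_j)=1/\binom{n_j}{|A_j|}$. Consider a system consisting of $r$ modules $(C_j,\chi_j)$ (each $\chi_j$ semicoherent) connected in series, i.e. $\phi(\mathbf{x})=\prod_{j=1}^r\chi_j(\mathbf{x}^{C_j})$. Then for every $0\le k\le n$, $$\overline{P}_{n-k}=\sum_{\substack{0\le a_j\le n_j\\ a_1+\cdots+a_r=k}}\frac{\binom{n_1}{a_1}\cdots\binom{n_r}{a_r}}{\binom{n}{k}}\prod_{j=1}^r\overline{P}_{j,n_j-a_j}.$$
   Context: Consider components $C=[n]$ with random lifetimes $T_1,\ldots,T_n$ whose joint distribution has no ties. Subsets are identified with Boolean vectors. A structure is semicoherent if it is nondecreasing in each variable, maps $\mathbf{0}$ to $0$ and $\mathbf{1}$ to $1$. The relative quality function is $q(A)=\Pr(\max_{i\notin A}T_i<\min_{i\in A}T_i)$, with $q(\varnothing)=q([n])=1$. For a partition into nonempty blocks $C_j$, write $n_j=|C_j|$, $A_j=A\cap C_j$, $\mathbf{x}^{C_j}=(x_i)_{i\in C_j}$, and $q^{C_j}(A)=\Pr(\max_{i\in C_j\setminus A}T_i<\min_{i\in A}T_i)$ for $A\subseteq C_j$. The tail probability signatures are $\overline{P}_k=\sum_{|A|=n-k}q(A)\phi(A)$ for the system and $\overline{P}_{j,k}=\sum_{A\subseteq C_j,|A|=n_j-k}q^{C_j}(A)\chi_j(A)$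 for module $j$. *)

From HB Require Import structures.
From mathcomp Require Import all_boot all_order all_algebra.
From mathcomp Require Import perm.
Set Implicit Arguments. Unset Strict Implicit. Unset Printing Implicit Defensive.
Import Order.TTheory GRing.Theory Num.Theory.
Local Open Scope ring_scope.

(* The ranking of the (tie-free) lifetimes T_1..T_n is a permutation s of 'I_n:
   s i < s j  iff  T_i < T_j.  Every event used in the paper (comparisons of
   lifetimes) is an event about this ranking, so the joint distribution enters
   only through the law p of the ranking permutation. *)
Definition is_rank_law (R : realFieldType) (n : nat) (p : {perm 'I_n} -> R) :=
  (forall s, 0 <= p s) /\ \sum_(s : {perm 'I_n}) p s = 1.

(* q^D(A) = Pr(max_{i in D \ A} T_i < min_{i in A} T_i), for A a subset of D. *)
Definition qsub (R : realFieldType) (n : nat) (p : {perm 'I_n} -> R)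
  (D A : {set 'I_n}) : R :=
  \sum_(s : {perm 'I_n} |
        [forall i, forall j, ((i \in D :\: A) && (j \in A)) ==> (s i < s j)%N])
     p s.

Definition qrel (R : realFieldType) (n : nat) (p : {perm 'I_n} -> R)
  (A : {set 'I_n}) : R := qsub p [set: 'I_n] A.

Definition semicoherent_on (n : nat) (D : {set 'I_n}) (chi : {set 'I_n} -> bool) :=
  [/\ forall A B : {set 'I_n}, A \subset B -> B \subset D -> chi A -> chi B,
      chi set0 = false & chi D = true].

Definition Pbar (R : realFieldType) (n : nat) (p : {perm 'I_n} -> R)
  (phi : {set 'I_n} -> bool) (k : nat) : R :=
  \sum_(A : {set 'I_n} | #|A| == (n - k)%N) qrel p A * (phi A)%:R.

Definition Pbar_mod (R : realFieldType) (n : nat) (p : {perm 'I_n} -> R)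
  (D : {set 'I_n}) (chi : {set 'I_n} -> bool) (k : nat) : R :=
  \sum_(A : {set 'I_n} | (A \subset D) && (#|A| == (#|D| - k)%N))
     qsub p D A * (chi A)%:R.

From HB Require Import structures.
From mathcomp Require Import all_boot all_order all_algebra.
From mathcomp Require Import perm.
Import Order.TTheory GRing.Theory Num.Theory.

(* When q is symmetric, every k-subset of [n] has quality
   1/C(n,k), so Pbar_{n-k} is the number N(k) of working k-subsets of the
   system divided by C(n,k); likewise Pbar_{j,n_j-a} = N_j(a)/C(n_j,a), with
   N_j(a) the number of working a-subsets of module j.  The theorem then
   reduces to a purely combinatorial identity for a series system:
     N(k) = sum_{a_1+...+a_r = k} prod_j N_j(a_j).
   It is proved by splitting a subset A of [n] into its traces A :&: C j on
   the blocks (a bijection onto families of block subsets, since the blocks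
   partition [n]), and then grouping these families by their vector of sizes. *)

(* A conjunction over a finite type, read as a 0/1 number, is the product of
   its 0/1 factors; this turns the series structure into a product. *)
Lemma nat_forall_prod {I : finType} (b : I -> bool) :
  ([forall i, b i] : nat) = (\prod_i (b i : nat))%N.
Proof.
case: (boolP [forall i, b i]) => [/forallP bT | /forallPn [i bi]].
  by rewrite big1 // => i _; rewrite bT.
by rewrite (bigD1 i) //= (negbTE bi) mul0n.
Qed.

Definition nworking {n : nat} (D : {set 'I_n}) (chi : {set 'I_n} -> bool)
  (a : nat) : nat :=
  (\sum_(B : {set 'I_n} | (B \subset D) && (#|B| == a)) chi B)%N.

Section SeriesCount.

Variables (n r : nat) (C : 'I_r -> {set 'I_n}) (chi : 'I_r -> {set 'I_n} -> bool).
Hypothesis C_disjoint : forall j j', j != j' -> [disjoint C j & C j'].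
Hypothesis C_cover : forall i, exists j, i \in C j.

Definition block_family (f : {ffun 'I_r -> {set 'I_n}}) : bool :=
  [forall j, f j \subset C j].

Lemma card_bigcup_blocks (f : {ffun 'I_r -> {set 'I_n}}) :
  block_family f -> #|\bigcup_j f j| = (\sum_j #|f j|)%N.
Proof.
move=> /forallP fC.
have card_sum (A : {set 'I_n}) : #|A| = (\sum_x (x \in A : nat))%N.
  by rewrite -sum1_card big_mkcond /=; apply: eq_bigr => x _; case: (x \in A).
rewrite card_sum (eq_bigr (fun j => \sum_x (x \in f j : nat))%N); last first.
  by move=> j _; rewrite card_sum.
rewrite (exchange_big _ _ _ _ _ (fun j x => (x \in f j : nat))) /=.
apply: eq_bigr => x _.
case: (boolP (x \in \bigcup_j f j)) => [/bigcupP[j0 _ xj0] | xNU].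
  rewrite (bigD1 j0) //= xj0 big1 // => j nj.
  apply/eqP; rewrite eqb0; apply/negP => xj.
  have := disjointFr (C_disjoint _ _ nj) (subsetP (fC j) _ xj).
  by rewrite (subsetP (fC j0) _ xj0).
rewrite big1 // => j _; apply/eqP; rewrite eqb0; apply: contra xNU => xj.
by apply/bigcupP; exists j.
Qed.

Lemma traces_bigcup (f : {ffun 'I_r -> {set 'I_n}}) :
  block_family f -> [ffun j => (\bigcup_j0 f j0) :&: C j] = f.
Proof.
move=> /forallP fC; apply/ffunP => j; rewrite ffunE; apply/setP => x.
rewrite inE; apply/andP/idP => [[/bigcupP[j0 _ xj0] xj] | xj]; last first.
  by split; [apply/bigcupP; exists j | apply: (subsetP (fC j))].
case: (eqVneq j0 j) => [<- // | nj].
by have := disjointFr (C_disjoint _ _ nj) (subsetP (fC j0) _ xj0); rewrite xj.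
Qed.

Definition nworking_families (k : nat) : nat :=
  (\sum_(f : {ffun 'I_r -> {set 'I_n}} |
     block_family f && ((\sum_j #|f j|)%N == k)) \prod_j (chi j (f j) : nat))%N.

(* Cutting a k-subset into its block traces is a bijection onto the block
   families of total size k. *)
Lemma count_by_traces k :
  (\sum_(A : {set 'I_n} | #|A| == k) \prod_j (chi j (A :&: C j) : nat))%N
  = nworking_families k.
Proof.
rewrite (reindex_onto (fun f : {ffun 'I_r -> {set 'I_n}} => \bigcup_j f j)
                      (fun A => [ffun j => A :&: C j])) /=; last first.
  move=> A _; apply/setP => i; apply/bigcupP/idP => [[j _] | iA].
    by rewrite ffunE inE => /andP[].
  by have [j ij] := C_cover i; exists j => //; rewrite ffunE inE iA.
apply: eq_big => [f | f /andP[_ /eqP traces_f]]; last first.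
  by apply: eq_bigr => j _; rewrite -{2}traces_f ffunE.
case: (boolP (block_family f)) => [fC | fNC].
  by rewrite card_bigcup_blocks // traces_bigcup // eqxx andbT.
apply/negbTE; apply: contra fNC => /andP[_ /eqP <-].
by apply/forallP => j; rewrite ffunE subsetIr.
Qed.

(* Grouping the block families by their size vector a (a j <= |C j|) gives
   the convolution of the per-module counts. *)
Lemma count_by_sizes k :
  (\sum_(a : {ffun 'I_r -> 'I_n.+1} |
          [forall j, (a j <= #|C j|)%N] && ((\sum_j (a j : nat))%N == k))
     \prod_j nworking (C j) (chi j) (a j))%N
  = nworking_families k.
Proof.
have C_small j : (#|C j| < n.+1)%N.
  by rewrite ltnS (leq_trans (max_card _)) ?card_ord.
have size_small f j : block_family f -> (#|f j| < n.+1)%N.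
  by move=> /forallP fC; rewrite (leq_ltn_trans (subset_leq_card (fC j))).
rewrite /nworking_families (partition_big
  (fun f : {ffun 'I_r -> {set 'I_n}} => [ffun j => inord #|f j| : 'I_n.+1])
  (fun a : {ffun 'I_r -> 'I_n.+1} =>
     [forall j, (a j <= #|C j|)%N] && ((\sum_j (a j : nat))%N == k))) /=; last first.
  move=> f /andP[fC /eqP sum_k].
  have sizes j : ([ffun j => inord #|f j| : 'I_n.+1] j : nat) = #|f j|.
    by rewrite ffunE inordK // size_small.
  apply/andP; split.
    by apply/forallP => j; rewrite sizes subset_leq_card // (forallP fC).
  by rewrite -sum_k; apply/eqP; apply: eq_bigr => j _; rewrite sizes.
apply: eq_bigr => a /andP[/forallP aC /eqP sum_a].
rewrite bigA_distr_big_dep; apply: eq_bigl => f.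
apply/familyP/andP => [fa | [/andP[fC _] /eqP <-] j].
  have fC : block_family f by apply/forallP => j; have /andP[] := fa j.
  have sizes j : #|f j| = a j by have /andP[_ /eqP] := fa j.
  split; first (apply/andP; split => //).
    by apply/eqP; rewrite -sum_a; apply: eq_bigr => j _; rewrite sizes.
  by apply/eqP/ffunP => j; rewrite ffunE sizes; apply/val_inj; rewrite /= inordK.
by rewrite unfold_in /= (forallP fC) ffunE /= inordK ?size_small.
Qed.

End SeriesCount.

Local Open Scope ring_scope.

Lemma Pbar_symmetric {R : realFieldType} {n : nat} (p : {perm 'I_n} -> R)
  (phi : {set 'I_n} -> bool) (k : nat) :
  (forall A : {set 'I_n}, qrel p A = 1 / ('C(n, #|A|))%:R) -> (k <= n)%N ->
  Pbar p phi (n - k)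
  = ((\sum_(A : {set 'I_n} | #|A| == k) phi A)%N)%:R / ('C(n, k))%:R.
Proof.
move=> q_sym kn; rewrite /Pbar subKn // natr_sum mulr_suml.
by apply: eq_bigr => A /eqP Ak; rewrite q_sym Ak div1r mulrC.
Qed.

Lemma Pbar_mod_symmetric {R : realFieldType} {n : nat} {p : {perm 'I_n} -> R}
  {D : {set 'I_n}} (chi : {set 'I_n} -> bool) {a : nat} :
  (forall A : {set 'I_n}, A \subset D -> qsub p D A = 1 / ('C(#|D|, #|A|))%:R) ->
  (a <= #|D|)%N ->
  Pbar_mod p D chi (#|D| - a) = (nworking D chi a)%:R / ('C(#|D|, a))%:R.
Proof.
move=> q_sym aD; rewrite /Pbar_mod subKn // natr_sum mulr_suml.
by apply: eq_bigr => B /andP[BD /eqP Ba]; rewrite q_sym // Ba div1r mulrC.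
Qed.

Theorem mainTheorem9 (R : realFieldType) (n r : nat)
  (p : {perm 'I_n} -> R) (C : 'I_r -> {set 'I_n})
  (chi : 'I_r -> {set 'I_n} -> bool) (phi : {set 'I_n} -> bool) :
  is_rank_law p ->
  (* C is a partition of [n] into nonempty blocks *)
  (forall j, C j != set0) ->
  (forall j j', j != j' -> [disjoint C j & C j']) ->
  (forall i, exists j, i \in C j) ->
  (* symmetry of q and of all q^{C_j} *)
  (forall A : {set 'I_n}, qrel p A = 1 / ('C(n, #|A|))%:R) ->
  (forall j (A : {set 'I_n}), A \subset C j ->
     qsub p (C j) A = 1 / ('C(#|C j|, #|A|))%:R) ->
  (* modules are semicoherent, connected in series *)
  (forall j, semicoherent_on (C j) (chi j)) ->
  (forall A, phi A = [forall j, chi j (A :&: C j)]) ->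
  forall k : nat, (k <= n)%N ->
  Pbar p phi (n - k) =
  \sum_(a : {ffun 'I_r -> 'I_n.+1} |
          [forall j, (a j <= #|C j|)%N] && ((\sum_j (a j : nat))%N == k))
     ((\prod_j 'C(#|C j|, a j))%N)%:R / ('C(n, k))%:R *
     \prod_j Pbar_mod p (C j) (chi j) (#|C j| - a j).
Proof.
move=> _ _ C_disj C_cov q_sym qC_sym _ phiE k kn.
rewrite Pbar_symmetric // (eq_bigr _ (fun A _ => congr1 nat_of_bool (phiE A))).
rewrite (eq_bigr _ (fun A _ => nat_forall_prod _)) count_by_traces //.
rewrite -count_by_sizes // natr_sum mulr_suml.
apply: eq_bigr => a /andP[/forallP aC _].
rewrite (eq_bigr _ (fun j _ => Pbar_mod_symmetric (chi j) (qC_sym j) (aC j))).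
have binom_nz : (\prod_j ('C(#|C j|, a j))%:R : R) != 0.
  by rewrite -natr_prod pnatr_eq0 -lt0n prodn_gt0 // => j; rewrite bin_gt0.
rewrite big_split /= prodfV !natr_prod.
by rewrite [RHS]mulrC -mulrA mulKf.
Qed.
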